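(* Let $a<b$, let $I_n: a=x_0<x_1<\cdots<x_{n-1}<x_n=b$ be a partition of $[a,b]$, and let $h_i=x_{i+1}-x_i$ for $i=0,\dots,n-1$. Let $f:[a,b]\rightarrow\mathbb{R}$ be a differentiable mapping in $(a,b)$ such that $f'\in L^1[a,b]$ and $\gamma\le f'(x)\le \Gamma$ for all $x\in [a,b]$, where $\gamma,\Gamma$ are real constants. Define \[ S(f,I_n)=\frac{1}{2}\sum_{i=0}^{n-1}\left[f\left(\frac{3x_i+x_{i+1}}{4}\right)+f\left(\frac{x_i+3x_{i+1}}{4}\right)\right]h_i \] and $R(f,I_n)=\int_a^b f(x)\,dx-S(f,I_n)$, and let $S_i=\frac{f(x_{i+1})-f(x_i)}{h_i}$ for $i=0,\dots,n-1$. Then \[ |R(f,I_n)|\leq\frac{1}{4}\sum_{i=0}^{n-1}(S_i-\gamma)h_i^2 \qquad\text{and}\qquad |R(f,I_n)|\leq\frac{1}{4}\sum_{i=0}^{n-1}(\Gamma-S_i)h_i^2. \] *)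

From Stdlib Require Import Reals Lra.
From Coquelicot Require Import Coquelicot.
Open Scope R_scope.

Fixpoint sumR (n : nat) (g : nat -> R) : R :=
  match n with
  | O => 0
  | S k => sumR k g + g k
  end.

Definition hstep (x : nat -> R) (i : nat) : R := x (S i) - x i.

Definition S_rule (f : R -> R) (x : nat -> R) (n : nat) : R :=
  / 2 * sumR n (fun i =>
     (f ((3 * x i + x (S i)) / 4) + f ((x i + 3 * x (S i)) / 4)) * hstep x i).

Definition R_rem (f : R -> R) (a b : R) (x : nat -> R) (n : nat) : R :=
  RInt f a b - S_rule f x n.

Definition slope (f : R -> R) (x : nat -> R) (i : nat) : R :=
  (f (x (S i)) - f (x i)) / hstep x i.

(* Subtracting the line [gamma * t] from [f] changes neither the slopes' excess [S_i - gamma] nor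
   the quadrature error, since the two-point rule integrates affine functions exactly; and it makes
   [f] nondecreasing.  For a nondecreasing [G] on [[u, v]] the error is controlled by cutting
   [[u, v]] into quarters and bounding the integral over each quarter by the values of [G] at its
   ends: all terms cancel except [(G v - G u) (v - u) / 4].  The bound with [Gamma] follows
   likewise from the nondecreasing function [Gamma * t - f t]. *)
From Stdlib Require Import Reals Lra Lia.
From Coquelicot Require Import Coquelicot.
Open Scope R_scope.

Lemma sumR_ext n g1 g2 :
  (forall i, (i < n)%nat -> g1 i = g2 i) -> sumR n g1 = sumR n g2.
Proof.
  induction n as [|n IH]; intros H; simpl; [reflexivity|].
  rewrite IH by (intros; apply H; lia). rewrite H by lia. reflexivity.
Qed.

Lemma sumR_le n g1 g2 :
  (forall i, (i < n)%nat -> g1 i <= g2 i) -> sumR n g1 <= sumR n g2.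
Proof.
  induction n as [|n IH]; intros H; simpl; [lra|].
  assert (sumR n g1 <= sumR n g2) by (apply IH; intros; apply H; lia).
  assert (g1 n <= g2 n) by (apply H; lia). lra.
Qed.

Lemma Rabs_sumR_le n g : Rabs (sumR n g) <= sumR n (fun i => Rabs (g i)).
Proof.
  induction n as [|n IH]; simpl; [rewrite Rabs_R0; lra|].
  eapply Rle_trans; [apply Rabs_triang | lra].
Qed.

Lemma sumR_scal_l n c g : c * sumR n g = sumR n (fun i => c * g i).
Proof. induction n as [|n IH]; simpl; [ring|]. rewrite <- IH. ring. Qed.

Definition nondecreasing_on (u v : R) (G : R -> R) : Prop :=
  forall s t, u <= s -> s <= t -> t <= v -> G s <= G t.

Lemma nondecreasing_on_of_derive (u v : R) (G dG : R -> R) :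
  (forall t, u <= t <= v -> continuous G t) ->
  (forall t, u < t < v -> is_derive G t (dG t)) ->
  (forall t, u < t < v -> 0 <= dG t) ->
  nondecreasing_on u v G.
Proof.
  intros HGc HGd Hpos s t Hs Hst Ht.
  (* [MVT_gen] may place its point at an endpoint, where [dG] is unconstrained;
     [Rmax 0 dG] agrees with [dG] inside and is nonnegative everywhere. *)
  pose proof (MVT_gen G s t (fun y => Rmax 0 (dG y))) as Hgen.
  rewrite Rmin_left, Rmax_right in Hgen by lra.
  destruct Hgen as [c [_ Hmvt]].
  - intros y Hy. rewrite Rmax_right by (apply Hpos; lra). apply HGd. lra.
  - intros y Hy. apply continuity_pt_filterlim, HGc. lra.
  - assert (0 <= Rmax 0 (dG c) * (t - s)) by (apply Rmult_le_pos; [apply Rmax_l | lra]).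
    lra.
Qed.

Lemma RInt_nondecreasing_bounds (G : R -> R) (s t : R) :
  s <= t -> ex_RInt G s t -> nondecreasing_on s t G ->
  (t - s) * G s <= RInt G s t <= (t - s) * G t.
Proof.
  intros Hst Hex Hmono.
  rewrite <- !(RInt_const (V := R_CompleteNormedModule)).
  split; apply RInt_le; auto using ex_RInt_const; intros y Hy; apply Hmono; lra.
Qed.

Definition rule_err (G : R -> R) (u v : R) : R :=
  RInt G u v - / 2 * ((G ((3 * u + v) / 4) + G ((u + 3 * v) / 4)) * (v - u)).

Lemma is_RInt_id (u v : R) : is_RInt (fun t => t) u v ((v * v - u * u) / 2).
Proof.
  replace ((v * v - u * u) / 2) with (minus (v * v / 2) (u * u / 2))
    by (unfold minus, plus, opp; simpl; field).
  apply (is_RInt_derive (V := R_CompleteNormedModule) (fun t => t * t / 2)).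
  - intros t _. auto_derive; [exact I | field].
  - intros t _. apply continuous_id.
Qed.

Lemma is_RInt_affine_comb (G : R -> R) (k c u v I : R) :
  is_RInt G u v I ->
  is_RInt (fun t => k * G t + c * t) u v (k * I + c * ((v * v - u * u) / 2)).
Proof.
  intros HI.
  apply (is_RInt_plus (V := R_NormedModule)); apply (is_RInt_scal (V := R_NormedModule));
    [exact HI | apply is_RInt_id].
Qed.

Lemma rule_err_affine (G : R -> R) (k c u v : R) :
  ex_RInt G u v ->
  rule_err (fun t => k * G t + c * t) u v = k * rule_err G u v.
Proof.
  intros [I HI]. unfold rule_err.
  rewrite (is_RInt_unique _ _ _ _ (is_RInt_affine_comb G k c u v I HI)),
          (is_RInt_unique _ _ _ _ HI).
  field.
Qed.

Lemma Rabs_rule_err_nondecreasing (G : R -> R) (u v : R) :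
  u < v -> ex_RInt G u v -> nondecreasing_on u v G ->
  Rabs (rule_err G u v) <= / 4 * ((G v - G u) * (v - u)).
Proof.
  intros Huv Hex Hmono. unfold rule_err.
  set (p := (3 * u + v) / 4); set (w := (u + v) / 2); set (q := (u + 3 * v) / 4).
  assert (Hex_in : forall s t, u <= s <= t -> t <= v -> ex_RInt G s t).
  { intros s t Hs Ht.
    apply (ex_RInt_Chasles_2 (V := R_CompleteNormedModule)) with u; [lra|].
    apply (ex_RInt_Chasles_1 (V := R_CompleteNormedModule)) with v; [lra | exact Hex]. }
  assert (Hchasles : forall s m t, u <= s <= m -> m <= t <= v ->
            RInt G s t = RInt G s m + RInt G m t).
  { intros s m t Hsm Hmt. symmetry.
    apply (RInt_Chasles (V := R_CompleteNormedModule)); apply Hex_in; lra. }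
  assert (Hquarter : forall s t, u <= s -> t <= v -> t - s = (v - u) / 4 ->
            (v - u) / 4 * G s <= RInt G s t <= (v - u) / 4 * G t).
  { intros s t Hs Ht Hlen. rewrite <- Hlen.
    apply RInt_nondecreasing_bounds; [lra | apply Hex_in; lra |].
    intros y z Hy Hyz Hz. apply Hmono; lra. }
  rewrite (Hchasles u p v), (Hchasles p w v), (Hchasles w q v)
    by (unfold p, w, q; lra).
  pose proof (Hquarter u p) as I1; pose proof (Hquarter p w) as I2;
  pose proof (Hquarter w q) as I3; pose proof (Hquarter q v) as I4.
  unfold p, w, q in *.
  assert (Hup : G u <= G p) by (apply Hmono; unfold p; lra).
  assert (Hpw : G p <= G w) by (apply Hmono; unfold p, w; lra).
  assert (Hwq : G w <= G q) by (apply Hmono; unfold w, q; lra).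
  assert (Hqv : G q <= G v) by (apply Hmono; unfold q; lra).
  apply Rabs_le. split; nra.
Qed.

Lemma Rabs_rule_err_le_slope (G dG : R -> R) (k c u v : R) :
  u < v -> Rabs k = 1 ->
  (forall t, u <= t <= v -> continuous G t) ->
  (forall t, u < t < v -> is_derive G t (dG t)) ->
  (forall t, u < t < v -> 0 <= k * dG t + c) ->
  Rabs (rule_err G u v) <= / 4 * ((k * ((G v - G u) / (v - u)) + c) * (v - u) ^ 2).
Proof.
  intros Huv Hk HGc HGd Hpos.
  set (H := fun t => k * G t + c * t).
  assert (HGint : ex_RInt G u v).
  { apply (ex_RInt_continuous (V := R_CompleteNormedModule)).
    rewrite Rmin_left, Rmax_right by lra. exact HGc. }
  assert (HHint : ex_RInt H u v).
  { destruct HGint as [I HI]. eexists. apply is_RInt_affine_comb, HI. }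
  assert (HHmono : nondecreasing_on u v H).
  { apply (nondecreasing_on_of_derive u v H (fun t => k * dG t + c)).
    - intros t Ht. apply (continuous_plus (fun t => k * G t) (fun t => c * t)).
      + apply (continuous_mult (fun _ => k) G); [apply continuous_const | apply HGc, Ht].
      + apply (continuous_mult (fun _ => c) (fun t => t));
          [apply continuous_const | apply continuous_id].
    - intros t Ht. apply (is_derive_plus (fun t => k * G t) (fun t => c * t)).
      + apply (is_derive_scal (fun t => G t)), HGd, Ht.
      + pose proof (is_derive_scal (fun t => t) t c 1 (is_derive_id t)) as Hlin.
        rewrite Rmult_1_r in Hlin. exact Hlin.
    - exact Hpos. }
  replace (Rabs (rule_err G u v)) with (Rabs (rule_err H u v))
    by (unfold H; rewrite rule_err_affine, Rabs_mult, Hk by exact HGint; ring).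
  eapply Rle_trans; [apply Rabs_rule_err_nondecreasing; assumption|].
  right. unfold H. field. lra.
Qed.

Lemma RInt_sub_S_rule (G : R -> R) (x : nat -> R) (n : nat) :
  (forall t, continuous G t) ->
  RInt G (x O) (x n) - S_rule G x n = sumR n (fun i => rule_err G (x i) (x (S i))).
Proof.
  intros HGc. unfold S_rule.
  induction n as [|n IH]; simpl.
  - rewrite RInt_point. change (0 - / 2 * 0 = 0). ring.
  - rewrite <- (RInt_Chasles (V := R_CompleteNormedModule) G (x O) (x n) (x (S n)))
      by (apply (ex_RInt_continuous (V := R_CompleteNormedModule)); intros; apply HGc).
    rewrite <- IH. unfold rule_err, hstep, plus; simpl. ring.
Qed.

Section Partition.

Variables (a b : R) (n : nat) (x : nat -> R).
Hypotheses (Hx0 : x O = a) (Hxn : x n = b)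
           (Hxinc : forall i : nat, (i < n)%nat -> x i < x (S i)).

Lemma partition_le i j : (i <= j <= n)%nat -> x i <= x j.
Proof.
  induction j as [|j IH]; intros Hij.
  - replace i with O by lia. lra.
  - destruct (Nat.eq_dec i (S j)) as [->|Hne]; [lra|].
    assert (x i <= x j) by (apply IH; lia).
    assert (x j < x (S j)) by (apply Hxinc; lia). lra.
Qed.

Lemma partition_node_bounds i : (i <= n)%nat -> a <= x i <= b.
Proof. intros Hi. rewrite <- Hx0, <- Hxn. split; apply partition_le; lia. Qed.

Lemma R_rem_ext (f g : R -> R) :
  (forall t, a <= t <= b -> g t = f t) -> R_rem g a b x n = R_rem f a b x n.
Proof.
  intros Hgf. unfold R_rem, S_rule.
  assert (Hab : a <= b) by (rewrite <- Hx0, <- Hxn; apply partition_le; lia).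
  rewrite (RInt_ext g f)
    by (rewrite Rmin_left, Rmax_right by lra; intros t Ht; apply Hgf; lra).
  f_equal. f_equal. apply sumR_ext. intros i Hi.
  pose proof (partition_node_bounds i ltac:(lia)).
  pose proof (partition_node_bounds (S i) ltac:(lia)).
  pose proof (Hxinc i Hi).
  rewrite !Hgf by lra. reflexivity.
Qed.

End Partition.

Lemma ex_continuous_extension (f : R -> R) (a b : R) :
  a < b ->
  filterlim f (at_right a) (locally (f a)) ->
  filterlim f (at_left b) (locally (f b)) ->
  (forall t, a < t < b -> ex_derive f t) ->
  exists g : R -> R, (forall t, continuous g t) /\
    (forall t, a <= t <= b -> g t = f t) /\
    (forall t, a < t < b -> is_derive g t (Derive f t)).
Proof.
  intros Hab Hfa Hfb Hdiff.
  destruct (C0_extension_lt (T := R_UniformSpace) f (f a) (f b) a b Hab)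
    as [g [Hgc [Hgf [Hga Hgb]]]];
    [intros t Ht; exact (ex_derive_continuous f t (Hdiff t Ht)) | exact Hfa | exact Hfb |].
  exists g. split; [exact Hgc|]. split.
  - intros t Ht.
    destruct (Req_dec t a) as [->|]; [exact Hga|].
    destruct (Req_dec t b) as [->|]; [exact Hgb|].
    apply Hgf. lra.
  - intros t Ht.
    apply (is_derive_ext_loc f); [|apply Derive_correct, Hdiff, Ht].
    assert (Hopen : open (fun y => a < y < b))
      by (apply open_and; [apply open_gt | apply open_lt]).
    apply (filter_imp (fun y => a < y < b)); [|exact (Hopen t Ht)].
    intros y Hy. symmetry. apply Hgf, Hy.
Qed.

Theorem theorem3p1
  (a b : R) (n : nat) (x : nat -> R) (f : R -> R) (gamma Gamma : R)
  (Hab : a < b)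
  (Hx0 : x O = a) (Hxn : x n = b)
  (Hxinc : forall i : nat, (i < n)%nat -> x i < x (S i))
  (Hcont_a : filterlim f (at_right a) (locally (f a)))
  (Hcont_b : filterlim f (at_left b) (locally (f b)))
  (Hdiff : forall t : R, a < t < b -> ex_derive f t)
  (Hbnd : forall t : R, a < t < b -> gamma <= Derive f t <= Gamma) :
  Rabs (R_rem f a b x n)
    <= / 4 * sumR n (fun i => (slope f x i - gamma) * (hstep x i) ^ 2)
  /\
  Rabs (R_rem f a b x n)
    <= / 4 * sumR n (fun i => (Gamma - slope f x i) * (hstep x i) ^ 2).
Proof.
  destruct (ex_continuous_extension f a b Hab Hcont_a Hcont_b Hdiff)
    as [g [Hgc [Hgf Hgd]]].
  assert (Hrem : R_rem f a b x n = sumR n (fun i => rule_err g (x i) (x (S i)))).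
  { rewrite <- (R_rem_ext a b n x Hx0 Hxn Hxinc f g Hgf), <- RInt_sub_S_rule by exact Hgc.
    unfold R_rem. rewrite Hx0, Hxn. reflexivity. }
  assert (Hcell : forall i k c, (i < n)%nat -> Rabs k = 1 ->
            (forall t, a < t < b -> 0 <= k * Derive f t + c) ->
            Rabs (rule_err g (x i) (x (S i)))
              <= / 4 * ((k * slope f x i + c) * hstep x i ^ 2)).
  { intros i k c Hi Hk Hpos.
    pose proof (partition_node_bounds a b n x Hx0 Hxn Hxinc i ltac:(lia)).
    pose proof (partition_node_bounds a b n x Hx0 Hxn Hxinc (S i) ltac:(lia)).
    pose proof (Hxinc i Hi).
    unfold slope, hstep. rewrite <- !Hgf by lra.
    apply (Rabs_rule_err_le_slope g (Derive f)); try assumption;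
      intros t Ht; [apply Hgc | apply Hgd | apply Hpos]; lra. }
  rewrite Hrem.
  split; (eapply Rle_trans; [apply Rabs_sumR_le|]);
    rewrite sumR_scal_l; apply sumR_le; intros i Hi.
  - replace (slope f x i - gamma) with (1 * slope f x i + - gamma) by ring.
    apply Hcell; [exact Hi | apply Rabs_R1 |].
    intros t Ht. pose proof (Hbnd t Ht). lra.
  - replace (Gamma - slope f x i) with (-1 * slope f x i + Gamma) by ring.
    apply Hcell; [exact Hi | rewrite Rabs_left by lra; ring |].
    intros t Ht. pose proof (Hbnd t Ht). lra.
Qed.
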